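(* Let the iterates be generated by the Fast PL-ADMM-PS algorithm, set $\hat{\boldsymbol{\lambda}}^{k+1}=\boldsymbol{\lambda}^k+\beta(\mathcal{A}(\mathbf{z}^k)-\mathbf{b})$, and let $$\alpha=\min\Bigl\{\frac{1}{n+1},\ \frac{\eta_i-n\|\mathcal{A}_i\|^2}{(n+1)\|\mathcal{A}_i\|^2}\ (i=1,\dots,n)\Bigr\}.$$ Then for every $k\ge0$ and every $\boldsymbol{\lambda}$, $$\langle\mathcal{A}(\mathbf{z}^{k+1})-\mathbf{b},\boldsymbol{\lambda}-\hat{\boldsymbol{\lambda}}^{k+1}\rangle+\frac{\beta\alpha}{2}\|\mathcal{A}(\mathbf{z}^{k+1})-\mathbf{b}\|^2\le\frac{1}{2\beta}\bigl(\|\boldsymbol{\lambda}^k-\boldsymbol{\lambda}\|^2-\|\boldsymbol{\lambda}^{k+1}-\boldsymbol{\lambda}\|^2\bigr)+\frac{\beta}{2}\sum_{i=1}^n\eta_i\|\mathbf{z}_i^{k+1}-\mathbf{z}_i^k\|^2.$$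
   Context: Setting: finite-dimensional real inner product spaces with induced norms $\|\cdot\|$. Problem: $\min\sum_{i=1}^n f_i(\mathbf{x}_i)$, $f_i=g_i+h_i$, subject to $\mathcal{A}(\mathbf{x}):=\sum_{i=1}^n\mathcal{A}_i(\mathbf{x}_i)=\mathbf{b}$, where $\mathbf{x}=(\mathbf{x}_1,\dots,\mathbf{x}_n)$, each $g_i,h_i$ is proper convex lower semicontinuous, $g_i$ is differentiable with $L_i$-Lipschitz gradient ($L_i>0$), each $\mathcal{A}_i$ is a nonzero linear map (adjoint $\mathcal{A}_i^T$, operator norm $\|\mathcal{A}_i\|$) into a common space. Fast PL-ADMM-PS: fix $\beta>0$ and $\eta_i>n\|\mathcal{A}_i\|^2$; given $\mathbf{x}^0,\mathbf{z}^0,\boldsymbol{\lambda}^0$ and $\theta^{(0)}=1$, for $k=0,1,2,\dots$, for each $i=1,\dots,n$ (in parallel): $\mathbf{y}_i^{k+1}=(1-\theta^{(k)})\mathbf{x}_i^k+\theta^{(k)}\mathbf{z}_i^k$; $\mathbf{z}_i^{k+1}=\arg\min_{\mathbf{x}_i}\ \langle\nabla g_i(\mathbf{y}_i^{k+1}),\mathbf{x}_i\rangle+h_i(\mathbf{x}_i)+\langle\boldsymbol{\lambda}^k,\mathcal{A}_i(\mathbf{x}_i)\rangle+\langle\beta\mathcal{A}_i^T(\mathcal{A}(\mathbf{z}^k)-\mathbf{b}),\mathbf{x}_i\rangle+\frac{L_i\theta^{(k)}+\beta\eta_i}{2}\|\mathbf{x}_i-\mathbf{z}_i^k\|^2$;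 $\mathbf{x}_i^{k+1}=(1-\theta^{(k)})\mathbf{x}_i^k+\theta^{(k)}\mathbf{z}_i^{k+1}$; then $\boldsymbol{\lambda}^{k+1}=\boldsymbol{\lambda}^k+\beta(\mathcal{A}(\mathbf{z}^{k+1})-\mathbf{b})$ and $\theta^{(k+1)}=\frac{-(\theta^{(k)})^2+\sqrt{(\theta^{(k)})^4+4(\theta^{(k)})^2}}{2}$. *)

From Stdlib Require Import Reals Lra.
From Stdlib Require Vectors.Fin.
Open Scope R_scope.

(* Finite-dimensional real inner product spaces are modelled (up to isometry)
   as Euclidean spaces R^d, vectors being functions Fin.t d -> R. *)
Definition Vec (d : nat) := Fin.t d -> R.

Fixpoint fsum (d : nat) : (Fin.t d -> R) -> R :=
  match d return (Fin.t d -> R) -> R with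
  | O => fun _ => 0
  | S d' => fun f => f Fin.F1 + fsum d' (fun j => f (Fin.FS j))
  end.

Fixpoint fmin (d : nat) : (Fin.t d -> R) -> R -> R :=
  match d return (Fin.t d -> R) -> R -> R with
  | O => fun _ init => init
  | S d' => fun f init => Rmin (f Fin.F1) (fmin d' (fun j => f (Fin.FS j)) init)
  end.

Definition vadd {d} (u v : Vec d) : Vec d := fun j => u j + v j.
Definition vsub {d} (u v : Vec d) : Vec d := fun j => u j - v j.
Definition vscale {d} (a : R) (u : Vec d) : Vec d := fun j => a * u j.
Definition inner {d} (u v : Vec d) : R := fsum d (fun j => u j * v j).
Definition norm {d} (u : Vec d) : R := sqrt (inner u u).

Definition Aop {m p} (M : Fin.t m -> Fin.t p -> R) (x : Vec p) : Vec m :=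
  fun r => fsum p (fun j => M r j * x j).
Definition AopT {m p} (M : Fin.t m -> Fin.t p -> R) (u : Vec m) : Vec p :=
  fun j => fsum m (fun r => M r j * u r).

Definition Atot {n m} {d : Fin.t n -> nat}
  (M : forall i, Fin.t m -> Fin.t (d i) -> R) (x : forall i, Vec (d i)) : Vec m :=
  fun r => fsum n (fun i => Aop (M i) (x i) r).

Definition is_opnorm {m p} (M : Fin.t m -> Fin.t p -> R) (c : R) : Prop :=
  is_lub (fun t => exists x : Vec p, norm x <= 1 /\ t = norm (Aop M x)) c.

Definition nonzero_map {m p} (M : Fin.t m -> Fin.t p -> R) : Prop :=
  exists r j, M r j <> 0.

(* extended reals (values in R U {+oo}) for possibly nonsmooth h_i *)
Inductive ER := ERfin (r : R) | ERinf.

Definition proper_fun {d} (h : Vec d -> ER) : Prop := exists x r, h x = ERfin r.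

Definition convex_ext {d} (h : Vec d -> ER) : Prop :=
  forall x y a b t, 0 < t < 1 -> h x = ERfin a -> h y = ERfin b ->
    exists c, h (vadd (vscale t x) (vscale (1 - t) y)) = ERfin c /\
              c <= t * a + (1 - t) * b.

Definition convex_fun {d} (g : Vec d -> R) : Prop :=
  forall x y t, 0 <= t <= 1 ->
    g (vadd (vscale t x) (vscale (1 - t) y)) <= t * g x + (1 - t) * g y.

Definition converges {d} (u : nat -> Vec d) (x : Vec d) : Prop :=
  forall eps, eps > 0 -> exists N, forall k, (k >= N)%nat -> norm (vsub (u k) x) < eps.

Definition closed_set {d} (S : Vec d -> Prop) : Prop :=
  forall (u : nat -> Vec d) x, (forall k, S (u k)) -> converges u x -> S x.

Definition lsc_ext {d} (h : Vec d -> ER) : Prop :=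
  forall c : R, closed_set (fun x => exists a, h x = ERfin a /\ a <= c).

Definition lsc_fun {d} (g : Vec d -> R) : Prop :=
  forall c : R, closed_set (fun x => g x <= c).

Definition is_gradient {d} (g : Vec d -> R) (G : Vec d -> Vec d) : Prop :=
  forall x eps, eps > 0 -> exists delta, delta > 0 /\
    forall h : Vec d, norm h < delta ->
      Rabs (g (vadd x h) - g x - inner (G x) h) <= eps * norm h.

Definition lipschitz_grad {d} (G : Vec d -> Vec d) (L : R) : Prop :=
  forall x y, norm (vsub (G x) (G y)) <= L * norm (vsub x y).

Definition is_argmin {d} (q : Vec d -> R) (h : Vec d -> ER) (z : Vec d) : Prop :=
  exists hz, h z = ERfin hz /\
    forall x hx, h x = ERfin hx -> q z + hz <= q x + hx.

Definition zsub_smooth {n m} {d : Fin.t n -> nat}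
  (M : forall i, Fin.t m -> Fin.t (d i) -> R) (b : Vec m)
  (gradg : forall i, Vec (d i) -> Vec (d i)) (L eta : Fin.t n -> R) (beta : R)
  (y z : forall i, Vec (d i)) (lam : Vec m) (theta : R) (i : Fin.t n)
  (x : Vec (d i)) : R :=
  inner (gradg i (y i)) x + inner lam (Aop (M i) x)
  + inner (vscale beta (AopT (M i) (vsub (Atot M z) b))) x
  + (L i * theta + beta * eta i) / 2 * (norm (vsub x (z i)))^2.

(** The multiplier update gives the exact identity
      <r, l - lamhat> - (|lam_k - l|^2 - |lam_{k+1} - l|^2)/(2 beta)
        = beta <r, w> - beta/2 |r|^2,
    where r = A(z^{k+1}) - b and w = A(z^{k+1} - z^k), because
    lam_{k+1} = lam_k + beta r and A(z^k) - b = r - w.  By Cauchy-Schwarz over the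
    n blocks and the operator norms, |w|^2 <= sum_i n |A_i|^2 |dz_i|^2, and the choice
    of alpha makes n |A_i|^2 <= (1 - alpha) eta_i.  Young's inequality
    2 <r, w> <= (1 - alpha) |r|^2 + |w|^2 / (1 - alpha) then closes the estimate. *)

From Stdlib Require Import Reals Lra Psatz FunctionalExtensionality.
From Stdlib Require Vectors.Fin.
Open Scope R_scope.

Lemma fsum_ext d (f g : Fin.t d -> R) : (forall j, f j = g j) -> fsum d f = fsum d g.
Proof.
  revert f g; induction d as [|d IH]; intros f g H; simpl; auto.
  now rewrite H, (IH (fun j => f (Fin.FS j)) (fun j => g (Fin.FS j))).
Qed.

Lemma fsum_le d (f g : Fin.t d -> R) : (forall j, f j <= g j) -> fsum d f <= fsum d g.
Proof.
  revert f g; induction d as [|d IH]; intros f g H; simpl; [lra|].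
  pose proof (IH (fun j => f (Fin.FS j)) (fun j => g (Fin.FS j)) (fun j => H _)).
  specialize (H Fin.F1). lra.
Qed.

Lemma fsum_plus d (f g : Fin.t d -> R) :
  fsum d (fun j => f j + g j) = fsum d f + fsum d g.
Proof.
  revert f g; induction d as [|d IH]; intros f g; simpl; [lra|].
  rewrite (IH (fun j => f (Fin.FS j)) (fun j => g (Fin.FS j))). lra.
Qed.

Lemma fsum_scal d c (f : Fin.t d -> R) : fsum d (fun j => c * f j) = c * fsum d f.
Proof.
  revert f; induction d as [|d IH]; intros f; simpl; [lra|].
  rewrite (IH (fun j => f (Fin.FS j))). lra.
Qed.

Lemma fsum_minus d (f g : Fin.t d -> R) :
  fsum d (fun j => f j - g j) = fsum d f - fsum d g.
Proof.
  revert f g; induction d as [|d IH]; intros f g; simpl; [lra|].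
  rewrite (IH (fun j => f (Fin.FS j)) (fun j => g (Fin.FS j))). lra.
Qed.

Lemma fsum_const d c : fsum d (fun _ => c) = INR d * c.
Proof. induction d as [|d IH]; simpl fsum; [simpl; lra|]. rewrite IH, S_INR. lra. Qed.

Lemma fsum_nonneg d (f : Fin.t d -> R) : (forall j, 0 <= f j) -> 0 <= fsum d f.
Proof.
  intro H. replace 0 with (fsum d (fun _ => 0)) by (rewrite fsum_const; lra).
  now apply fsum_le.
Qed.

Lemma fsum_swap m n (F : Fin.t n -> Fin.t m -> R) :
  fsum m (fun j => fsum n (fun i => F i j)) = fsum n (fun i => fsum m (fun j => F i j)).
Proof.
  revert F; induction n as [|n IH]; intros F; simpl.
  - rewrite fsum_const. lra.
  - now rewrite fsum_plus, (IH (fun i => F (Fin.FS i))).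
Qed.

Lemma fsum_mul d (f g : Fin.t d -> R) :
  fsum d f * fsum d g = fsum d (fun i => fsum d (fun j => f i * g j)).
Proof.
  rewrite Rmult_comm, <- fsum_scal. apply fsum_ext. intro i.
  now rewrite fsum_scal, Rmult_comm.
Qed.

(* Expand the square as a double sum and use a_i a_j <= (a_i^2 + a_j^2) / 2. *)
Lemma fsum_sqr_le d (a : Fin.t d -> R) :
  fsum d a * fsum d a <= INR d * fsum d (fun i => a i * a i).
Proof.
  rewrite fsum_mul.
  apply Rle_trans with
    (fsum d (fun i => fsum d (fun j => / 2 * (a i * a i) + / 2 * (a j * a j)))).
  { apply fsum_le. intro i. apply fsum_le. intro j.
    pose proof (Rle_0_sqr (a i - a j)). unfold Rsqr in *. lra. }
  right. transitivity (fsum d (fun i =>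
    / 2 * (INR d * (a i * a i)) + / 2 * fsum d (fun j => a j * a j))).
  { apply fsum_ext. intro i. rewrite fsum_plus, fsum_const, fsum_scal. ring. }
  rewrite fsum_plus, fsum_const, !fsum_scal. lra.
Qed.

Lemma fsum_sqr_eq0 d (f : Fin.t d -> R) :
  fsum d (fun j => f j * f j) <= 0 -> forall j, f j = 0.
Proof.
  revert f; induction d as [|d IH]; intros f H j; [inversion j|].
  simpl in H.
  assert (0 <= fsum d (fun j => f (Fin.FS j) * f (Fin.FS j)))
    by (apply fsum_nonneg; intro i; nra).
  refine (Fin.caseS' j (fun j => f j = 0) _ _).
  - nra.
  - intro p. apply (IH (fun j => f (Fin.FS j))). nra.
Qed.

Lemma fmin_le_init d f init : fmin d f init <= init.
Proof.
  revert f; induction d as [|d IH]; intros f; simpl; [lra|].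
  eapply Rle_trans; [apply Rmin_r | apply IH].
Qed.

Lemma fmin_le d f init (i : Fin.t d) : fmin d f init <= f i.
Proof.
  revert f i; induction d as [|d IH]; intros f i; [inversion i|].
  refine (Fin.caseS' i (fun i => fmin (S d) f init <= f i) _ _); simpl.
  - apply Rmin_l.
  - intro p. eapply Rle_trans; [apply Rmin_r | apply (IH (fun j => f (Fin.FS j)))].
Qed.

Lemma inner_self_nonneg {d} (u : Vec d) : 0 <= inner u u.
Proof. apply fsum_nonneg. intro j. nra. Qed.

Lemma norm_nonneg {d} (u : Vec d) : 0 <= norm u.
Proof. apply sqrt_pos. Qed.

Lemma norm_sq {d} (u : Vec d) : norm u ^ 2 = inner u u.
Proof. apply pow2_sqrt, inner_self_nonneg. Qed.

Lemma norm_scale {d} s (u : Vec d) : 0 <= s -> norm (vscale s u) = s * norm u.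
Proof.
  intro Hs. unfold norm.
  replace (inner (vscale s u) (vscale s u)) with (s * s * inner u u).
  - rewrite sqrt_mult_alt by nra. now rewrite sqrt_square.
  - unfold inner, vscale. rewrite <- fsum_scal. apply fsum_ext. intro j. ring.
Qed.

Lemma Aop_scale {m p} (M : Fin.t m -> Fin.t p -> R) s x :
  Aop M (vscale s x) = vscale s (Aop M x).
Proof.
  extensionality r. unfold Aop, vscale. rewrite <- fsum_scal.
  apply fsum_ext. intro j. ring.
Qed.

(* For [x <> 0] rescale [x] to the unit sphere; for [x = 0] a nonzero [Aop M x]
   would make the set of values [norm (Aop M (s x))] unbounded. *)
Lemma opnorm_bound {m p} (M : Fin.t m -> Fin.t p -> R) c x :
  is_opnorm M c -> norm (Aop M x) <= c * norm x.
Proof.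
  intros [Hub _].
  assert (Hx := norm_nonneg x). assert (HAx := norm_nonneg (Aop M x)).
  destruct (Rlt_or_le 0 (norm x)) as [Hpos|Hzero].
  - assert (Hinv : 0 < / norm x) by now apply Rinv_0_lt_compat.
    assert (Hunit : norm (Aop M (vscale (/ norm x) x)) <= c).
    { apply Hub. exists (vscale (/ norm x) x). split; [|reflexivity].
      rewrite norm_scale, Rinv_l; lra. }
    rewrite Aop_scale, norm_scale in Hunit by lra.
    apply (Rmult_le_reg_l (/ norm x)); [lra|].
    replace (/ norm x * (c * norm x)) with c by (field; lra). exact Hunit.
  - assert (Hx0 : norm x = 0) by lra. rewrite Hx0, Rmult_0_r.
    destruct (Rlt_or_le 0 (norm (Aop M x))) as [HA|HA]; [exfalso|lra].
    set (s := (Rabs c + 1) / norm (Aop M x)).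
    assert (Hs : 0 < s) by (apply Rdiv_lt_0_compat; pose proof (Rabs_pos c); lra).
    assert (Hbig : norm (Aop M (vscale s x)) <= c).
    { apply Hub. exists (vscale s x). split; [|reflexivity].
      rewrite norm_scale, Hx0; lra. }
    rewrite Aop_scale, norm_scale in Hbig by lra.
    replace (s * norm (Aop M x)) with (Rabs c + 1) in Hbig by (unfold s; field; lra).
    pose proof (Rle_abs c). lra.
Qed.

Lemma opnorm_bound_sq {m p} (M : Fin.t m -> Fin.t p -> R) c x :
  is_opnorm M c -> inner (Aop M x) (Aop M x) <= c ^ 2 * inner x x.
Proof.
  intro Hc. rewrite <- !norm_sq.
  pose proof (opnorm_bound M c x Hc). pose proof (norm_nonneg (Aop M x)).
  pose proof (norm_nonneg x). nra.
Qed.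

Lemma Atot_vsub {n m} {d : Fin.t n -> nat} (M : forall i, Fin.t m -> Fin.t (d i) -> R)
  (x y : forall i, Vec (d i)) :
  vsub (Atot M x) (Atot M y) = Atot M (fun i => vsub (x i) (y i)).
Proof.
  extensionality r. unfold vsub, Atot, Aop. rewrite <- fsum_minus.
  apply fsum_ext. intro i. rewrite <- fsum_minus. apply fsum_ext. intro j. ring.
Qed.

Lemma Atot_sq_le {n m} {d : Fin.t n -> nat} (M : forall i, Fin.t m -> Fin.t (d i) -> R)
  (x : forall i, Vec (d i)) :
  inner (Atot M x) (Atot M x)
  <= INR n * fsum n (fun i => inner (Aop (M i) (x i)) (Aop (M i) (x i))).
Proof.
  unfold inner at 1, Atot.
  apply Rle_trans with
    (fsum m (fun r => INR n * fsum n (fun i => Aop (M i) (x i) r * Aop (M i) (x i) r))).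
  - apply fsum_le. intro r. apply fsum_sqr_le.
  - now rewrite fsum_scal, fsum_swap.
Qed.

Lemma Atot_sq_le_weighted {n m} {d : Fin.t n -> nat}
  (M : forall i, Fin.t m -> Fin.t (d i) -> R) (normA eta : Fin.t n -> R) c
  (x : forall i, Vec (d i)) :
  (forall i, is_opnorm (M i) (normA i)) ->
  (forall i, INR n * normA i ^ 2 <= c * eta i) ->
  inner (Atot M x) (Atot M x) <= c * fsum n (fun i => eta i * norm (x i) ^ 2).
Proof.
  intros HnormA Hweight. eapply Rle_trans; [apply Atot_sq_le|].
  rewrite <- !fsum_scal. apply fsum_le. intro i. rewrite norm_sq.
  pose proof (opnorm_bound_sq (M i) (normA i) (x i) (HnormA i)).
  pose proof (Hweight i). pose proof (inner_self_nonneg (x i)). pose proof (pos_INR n).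
  nra.
Qed.

(* [a] plays |A_i|^2; when [a = 0] the first bound is [al <= 0] (division by zero is 0). *)
Lemma stepsize_weight_bound N a e al :
  0 <= N -> 0 <= a -> N * a < e ->
  al <= (e - N * a) / ((N + 1) * a) -> al <= 1 / (N + 1) ->
  N * a <= (1 - al) * e.
Proof.
  intros HN Ha He Hal1 Hal2.
  assert (HNa : 0 <= N * a) by (apply Rmult_le_pos; lra).
  destruct (Rle_lt_dec al 0) as [Hneg|Hpos].
  { assert (al * e <= 0) by nra. lra. }
  destruct (Req_dec a 0) as [Ha0|Ha0].
  { subst a. unfold Rdiv in Hal1. rewrite !Rmult_0_r, Rinv_0, Rmult_0_r in Hal1. lra. }
  assert (Hal1' : al * ((N + 1) * a) <= e - N * a).
  { apply Rmult_le_reg_r with (/ ((N + 1) * a)).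
    - apply Rinv_0_lt_compat. nra.
    - replace (al * ((N + 1) * a) * / ((N + 1) * a)) with al by (field; nra). exact Hal1. }
  destruct (Rle_lt_dec e ((N + 1) * a)).
  - assert (al * e <= al * ((N + 1) * a)) by (apply Rmult_le_compat_l; lra). lra.
  - assert (al * e <= 1 / (N + 1) * e) by (apply Rmult_le_compat_r; lra).
    assert (N * a <= N * (e / (N + 1))).
    { apply Rmult_le_compat_l; [lra|]. apply Rmult_le_reg_r with (N + 1); [lra|].
      replace (e / (N + 1) * (N + 1)) with e by (field; lra). lra. }
    assert (1 / (N + 1) * e = e - N * (e / (N + 1))) by (field; lra).
    lra.
Qed.

Lemma young_inner {d} (r w : Vec d) c E :
  0 <= c -> 0 <= E -> inner w w <= c * E -> 2 * inner r w <= c * inner r r + E.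
Proof.
  intros Hc HE Hw. pose proof (inner_self_nonneg r).
  destruct (Req_dec c 0) as [Hc0|Hc0].
  - assert (Hw0 : forall j, w j = 0) by (apply fsum_sqr_eq0; unfold inner in Hw; nra).
    assert (inner r w = 0).
    { unfold inner. replace 0 with (fsum d (fun _ => 0)) by (rewrite fsum_const; ring).
      apply fsum_ext. intro j. rewrite Hw0. ring. }
    nra.
  - assert (Hyoung : 2 * inner r w <= c * inner r r + / c * inner w w).
    { unfold inner. rewrite <- !fsum_scal, <- fsum_plus. apply fsum_le. intro j.
      assert (Hsq : c * (r j * r j) + / c * (w j * w j) - 2 * (r j * w j)
                    = / c * ((c * r j - w j) * (c * r j - w j))) by (field; lra).
      assert (0 <= / c) by (left; apply Rinv_0_lt_compat; lra).
      pose proof (Rle_0_sqr (c * r j - w j)). unfold Rsqr in *. nra. }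
    assert (/ c * inner w w <= E).
    { apply Rmult_le_reg_l with c; [lra|].
      replace (c * (/ c * inner w w)) with (inner w w) by (field; lra). lra. }
    lra.
Qed.

Lemma multiplier_step_identity {m} beta (lam l r w : Vec m) :
  beta <> 0 ->
  inner r (vsub l (vadd lam (vscale beta (vsub r w))))
  - 1 / (2 * beta) * (norm (vsub lam l) ^ 2 - norm (vsub (vadd lam (vscale beta r)) l) ^ 2)
  = beta * inner r w - beta / 2 * inner r r.
Proof.
  intro Hbeta. rewrite !norm_sq. unfold inner.
  rewrite <- fsum_minus, <- fsum_scal, <- fsum_minus, <- !fsum_scal, <- fsum_minus.
  apply fsum_ext. intro j. unfold vsub, vadd, vscale. field. exact Hbeta.
Qed.

Theorem proposition4
  (n m : nat) (d : Fin.t n -> nat)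
  (M : forall i : Fin.t n, Fin.t m -> Fin.t (d i) -> R) (b : Vec m)
  (g : forall i : Fin.t n, Vec (d i) -> R)
  (gradg : forall i : Fin.t n, Vec (d i) -> Vec (d i))
  (h : forall i : Fin.t n, Vec (d i) -> ER)
  (L normA eta : Fin.t n -> R) (beta : R)
  (xs ys zs : nat -> forall i : Fin.t n, Vec (d i))
  (lam : nat -> Vec m) (theta : nat -> R)
  (* problem data *)
  (Hg_conv : forall i, convex_fun (g i))
  (Hg_lsc : forall i, lsc_fun (g i))
  (Hg_grad : forall i, is_gradient (g i) (gradg i))
  (HL : forall i, L i > 0)
  (Hg_lip : forall i, lipschitz_grad (gradg i) (L i))
  (Hh_proper : forall i, proper_fun (h i))
  (Hh_conv : forall i, convex_ext (h i))
  (Hh_lsc : forall i, lsc_ext (h i))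
  (HA_nz : forall i, nonzero_map (M i))
  (HnormA : forall i, is_opnorm (M i) (normA i))
  (* parameters *)
  (Hbeta : beta > 0)
  (Heta : forall i, eta i > INR n * (normA i)^2)
  (* Fast PL-ADMM-PS iterations *)
  (Htheta0 : theta 0%nat = 1)
  (Hy : forall k i, ys (S k) i =
          vadd (vscale (1 - theta k) (xs k i)) (vscale (theta k) (zs k i)))
  (Hz : forall k i, is_argmin
          (zsub_smooth M b gradg L eta beta (ys (S k)) (zs k) (lam k) (theta k) i)
          (h i) (zs (S k) i))
  (Hx : forall k i, xs (S k) i =
          vadd (vscale (1 - theta k) (xs k i)) (vscale (theta k) (zs (S k) i)))
  (Hlam : forall k, lam (S k) =
          vadd (lam k) (vscale beta (vsub (Atot M (zs (S k))) b)))
  (Htheta : forall k, theta (S k) =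
          (- (theta k)^2 + sqrt ((theta k)^4 + 4 * (theta k)^2)) / 2) :
  let alpha := fmin n (fun i => (eta i - INR n * (normA i)^2)
                                 / ((INR n + 1) * (normA i)^2)) (1 / (INR n + 1)) in
  forall (k : nat) (l : Vec m),
    let lamhat := vadd (lam k) (vscale beta (vsub (Atot M (zs k)) b)) in
    inner (vsub (Atot M (zs (S k))) b) (vsub l lamhat)
      + beta * alpha / 2 * (norm (vsub (Atot M (zs (S k))) b))^2
    <= 1 / (2 * beta) * ((norm (vsub (lam k) l))^2 - (norm (vsub (lam (S k)) l))^2)
       + beta / 2 * fsum n (fun i => eta i * (norm (vsub (zs (S k) i) (zs k i)))^2).
Proof.
  intros alpha k l lamhat.
  set (r := vsub (Atot M (zs (S k))) b).
  set (dz := fun i => vsub (zs (S k) i) (zs k i)).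
  set (w := Atot M dz).
  set (E := fsum n (fun i => eta i * norm (dz i) ^ 2)).
  assert (HN := pos_INR n).
  assert (Hweight : forall i, INR n * normA i ^ 2 <= (1 - alpha) * eta i).
  { intro i. apply stepsize_weight_bound; try lra.
    - apply pow2_ge_0.
    - apply Heta.
    - apply (fmin_le n (fun i => (eta i - INR n * normA i ^ 2)
                                 / ((INR n + 1) * normA i ^ 2))).
    - apply fmin_le_init. }
  assert (Halpha : alpha <= 1).
  { apply Rle_trans with (1 / (INR n + 1)); [apply fmin_le_init|].
    apply Rmult_le_reg_r with (INR n + 1); [lra|].
    replace (1 / (INR n + 1) * (INR n + 1)) with 1 by (field; lra). lra. }
  assert (HE : 0 <= E).
  { apply fsum_nonneg. intro i. apply Rmult_le_pos; [|apply pow2_ge_0].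
    pose proof (Heta i). pose proof (pow2_ge_0 (normA i)). nra. }
  assert (Hw : inner w w <= (1 - alpha) * E)
    by exact (Atot_sq_le_weighted M normA eta (1 - alpha) dz HnormA Hweight).
  assert (Hresidual : vsub (Atot M (zs k)) b = vsub r w).
  { unfold w, dz. rewrite <- Atot_vsub. extensionality j. unfold r, vsub. ring. }
  assert (Hidentity := multiplier_step_identity beta (lam k) l r w ltac:(lra)).
  assert (Hyoung := young_inner r w (1 - alpha) E ltac:(lra) HE Hw).
  assert (beta * (2 * inner r w) <= beta * ((1 - alpha) * inner r r + E))
    by (apply Rmult_le_compat_l; lra).
  unfold lamhat. rewrite Hresidual, Hlam. fold r. rewrite norm_sq.
  change (fsum n (fun i => eta i * norm (vsub (zs (S k) i) (zs k i)) ^ 2)) with E.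
  lra.
Qed.
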